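(* $\Delta_0$ is the union of the good simplices.
   Context: Let $k\ge2$, $n=2k-1$, $e_1,\dots,e_k$ the standard basis of $\mathbb R^k$, $r_{(k)}=(r,\dots,r)\in\mathbb R^k$. In $\mathbb R^{2k}$ set $A_j=(e_j,0_{(k)})$, $B_j=\frac1{2n}(2_{(k)}-e_j,2_{(k)}-e_j)$, $C_j=(0_{(k)},e_j)$ for $j=1,\dots,k$; $A,B,C$ the corresponding $k$-element sets and $X=A\cup B\cup C$. $\langle\cdot\rangle$ denotes convex hull. $\Delta_0=\langle A\cup C\rangle$ is the standard simplex. A $2k$-element subset $S\subset X$ is good if it contains no set $\{A_j,B_j,C_j\}$ and $S\ne A\cup C$; a good simplex is $\langle S\rangle$ for a good set $S$. *)

From mathcomp Require Import all_boot all_order all_algebra.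
Set Implicit Arguments. Unset Strict Implicit. Unset Printing Implicit Defensive.
Import Order.TTheory GRing.Theory Num.Theory.
Local Open Scope ring_scope.

(* Points of X are labelled by (t, j) : 'I_3 * 'I_k, where
   t = 0 : A_j,  t = 1 : B_j,  t = 2 : C_j.  Points live in R^(2k) = 'rV_(k+k). *)
Definition lbl (k : nat) := ('I_3 * 'I_k)%type.

Section Pts.
Variables (R : realFieldType) (k : nat).

Definition evec (j : 'I_k) : 'rV[R]_k := \row_(i < k) (i == j)%:R.

Definition nn : nat := (2 * k - 1)%N.

Definition ptA (j : 'I_k) : 'rV[R]_(k + k) := row_mx (evec j) 0.
Definition ptB (j : 'I_k) : 'rV[R]_(k + k) :=
  (2 * nn%:R)^-1 *: row_mx (const_mx 2 - evec j) (const_mx 2 - evec j).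
Definition ptC (j : 'I_k) : 'rV[R]_(k + k) := row_mx 0 (evec j).

Definition pt (l : lbl k) : 'rV[R]_(k + k) :=
  let: (t, j) := l in
  if val t == 0%N then ptA j else if val t == 1%N then ptB j else ptC j.

Definition in_hull (S : {set lbl k}) (x : 'rV[R]_(k + k)) : Prop :=
  exists w : lbl k -> R,
    (forall l, 0 <= w l) /\ \sum_(l in S) w l = 1 /\
    x = \sum_(l in S) w l *: pt l.
End Pts.

Definition labA (k : nat) : {set lbl k} := [set l | val l.1 == 0%N].
Definition labC (k : nat) : {set lbl k} := [set l | val l.1 == 2%N].

Definition good (k : nat) (S : {set lbl k}) : Prop :=
  #|S| = (2 * k)%N /\
  (forall j : 'I_k, ~ (forall t : 'I_3, (t, j) \in S)) /\
  S <> labA k :|: labC k.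

From mathcomp Require Import all_boot all_order all_algebra.
From mathcomp Require Import ring lra.
Set Implicit Arguments. Unset Strict Implicit. Unset Printing Implicit Defensive.
Import Order.TTheory GRing.Theory Num.Theory.
Local Open Scope ring_scope.

(* Each [B_j] is itself a point of [Delta_0]: its coordinates are nonnegative
   and sum to 1, half in each block. So a combination giving the weights [q]
   to the [B_j] has the same coordinates as the combination of the [A_i] and
   [C_i] with extra weight [shadow q i] on both [A_i] and [C_i]; hence every
   simplex lies in [Delta_0]. Conversely, for [x = \sum a_i A_i + c_i C_i]
   one moves the mass [mu_i = min(a_i, c_i, v)] off both [A_i] and [C_i] onto
   weights [t_i] of the [B_i] with [shadow t = mu]; this is possible for a
   level [v] with [\sum_i (v - mu_i) = v / 2]. Afterwards each triple has a
   zero weight ([A_i] or [C_i] if [mu_i = min(a_i, c_i)], [B_i] otherwise),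
   and some triple has a zero weight at [A_i] or [C_i]; dropping these points
   leaves a good set whose simplex contains [x]. *)

(* The level is the least value of [2 \sum_(i in J) m i / (2 #|J| - 1)] over
   nonempty [J]; the sum is then [\sum_(i in J) (v - m i)] over [J = {m < v}]. *)
Lemma exists_balanced_level (R : realFieldType) (I : finType) (i0 : I)
    (m : I -> R) :
  (forall i, 0 <= m i) ->
  exists v, [/\ 0 <= v, exists i, m i <= v
              & \sum_i (v - Num.min (m i) v) = v / 2].
Proof.
move=> m_ge0.
have den_gt0 (J : {set I}) : J != set0 -> 0 < 2 * #|J|%:R - 1 :> R.
  by rewrite -card_gt0 -(@ler1n R); lra.
pose f (J : {set I}) := 2 * (\sum_(i in J) m i) / (2 * #|J|%:R - 1).
have setT_neq0 : [set: I] != set0 by apply/set0Pn; exists i0.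
have [J0 J0_neq0 J0_min] := @arg_minP _ _ _ _ (fun J => J != set0) f setT_neq0.
set v := f _ in J0_min *.
have vJ0 : v * (2 * #|J0|%:R - 1) = 2 * \sum_(i in J0) m i.
  by rewrite /v /f mulrAC -mulrA divff ?mulr1 // gt_eqF // den_gt0.
have vJ (J : {set I}) : J != set0 -> v * (2 * #|J|%:R - 1) <= 2 * \sum_(i in J) m i.
  by move=> J_neq0; rewrite -ler_pdivlMr ?den_gt0 //; apply: J0_min.
have v_ge0 : 0 <= v.
  by rewrite /v /f divr_ge0 ?mulr_ge0 ?sumr_ge0 // ltW // den_gt0.
have sumJ0 : \sum_(i in J0) (v - m i) = v / 2.
  by rewrite sumrB sumr_const -mulr_natr; move: vJ0; lra.
exists v; split=> //.
  apply/existsP; apply: contraT; rewrite negb_exists => /forallP v_lt_m.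
  have : \sum_(i in J0) (v - m i) < \sum_(i in J0) 0.
    apply: ltr_sum => [|i _]; last by rewrite subr_lt0 ltNge v_lt_m.
    by case/set0Pn: J0_neq0 => i iJ0; apply/hasP; exists i; rewrite ?mem_index_enum.
  by rewrite big1_eq sumJ0; lra.
pose J1 := [set i | m i < v].
have -> : \sum_i (v - Num.min (m i) v) = \sum_(i in J1) (v - m i).
  rewrite [RHS]big_mkcond; apply: eq_bigr => i _; rewrite inE.
  by case: ltP; rewrite ?subrr.
apply/eqP; rewrite eq_le; apply/andP; split.
  have [->|J1_neq0] := eqVneq J1 set0; first by rewrite big_set0; lra.
  by move: (vJ J1 J1_neq0); rewrite sumrB sumr_const -mulr_natr; lra.
rewrite -sumJ0 [X in X <= _]big_mkcond [X in _ <= X]big_mkcond /=.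
apply: ler_sum => i _; rewrite inE.
by case: ifP => _; case: ltP => // h; rewrite ?subr_le0 // subr_ge0 ltW.
Qed.

Definition tA : 'I_3 := @Ordinal 3 0 isT.
Definition tB : 'I_3 := @Ordinal 3 1 isT.
Definition tC : 'I_3 := @Ordinal 3 2 isT.

Lemma big_lbl (V : Type) (idx : V) (op : Monoid.com_law idx) k (F : lbl k -> V) :
  \big[op/idx]_l F l = \big[op/idx]_j op (op (F (tA, j)) (F (tB, j))) (F (tC, j)).
Proof.
rewrite (eq_bigr (fun l => F (l.1, l.2))); last by case.
rewrite -(pair_big xpredT xpredT (fun t j => F (t, j))) /= exchange_big /=.
apply: eq_bigr => j _; rewrite !big_ord_recl big_ord0 Monoid.mulm1 Monoid.mulmA.
by congr (op (op (F (_, j)) (F (_, j))) (F (_, j))); apply/val_inj.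
Qed.

Lemma sum_mul_delta (R : pzSemiRingType) (I : finType) (f : I -> R) (i : I) :
  \sum_j f j * (i == j)%:R = f i.
Proof.
rewrite (bigD1 i) //= eqxx mulr1 big1 ?addr0 // => j /negbTE.
by rewrite eq_sym => ->; rewrite mulr0.
Qed.

Section Configuration.
Variables (R : realFieldType) (k : nat).
Local Notation beta := ((2 * (nn k)%:R)^-1 : R).

Definition tri_weight (p q r : 'I_k -> R) (l : lbl k) : R :=
  let: (t, j) := l in if val t == 0%N then p j else if val t == 1%N then q j else r j.

Definition comb (p q r : 'I_k -> R) : 'rV[R]_(k + k) :=
  \sum_l tri_weight p q r l *: pt R l.

(* The common [A_i]- and [C_i]-coordinate of [\sum_j q j *: B_j]. *)
Definition shadow (q : 'I_k -> R) (i : 'I_k) : R := beta * (2 * \sum_j q j - q i).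

Lemma sum_tri_weight p q r :
  \sum_l tri_weight p q r l = \sum_j (p j + q j + r j).
Proof. by rewrite big_lbl. Qed.

Lemma tri_weight_lbl (w : lbl k -> R) :
  tri_weight (fun j => w (tA, j)) (fun j => w (tB, j)) (fun j => w (tC, j)) =1 w.
Proof.
by case=> -[[|[|[|t]]] ht] j //=; congr w; congr pair; apply/val_inj.
Qed.

Lemma shadowE q i : shadow q i = \sum_j q j * (beta * (2 - (i == j)%:R)).
Proof.
rewrite (eq_bigr (fun j => beta * 2 * q j - beta * (q j * (i == j)%:R))) => [|j _].
  by rewrite sumrB -!mulr_sumr sum_mul_delta /shadow; ring.
by ring.
Qed.

Lemma comb_lshift p q r i : comb p q r 0 (lshift k i) = p i + shadow q i.
Proof.
rewrite /comb big_lbl summxE /= /ptA /ptB /ptC shadowE.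
under eq_bigr do rewrite !(row_mxEl, mxE) mulr0 addr0.
by rewrite big_split /= sum_mul_delta.
Qed.

Lemma comb_rshift p q r i : comb p q r 0 (rshift k i) = r i + shadow q i.
Proof.
rewrite /comb big_lbl summxE /= /ptA /ptB /ptC shadowE.
under eq_bigr do rewrite !(row_mxEr, mxE) mulr0 add0r addrC.
by rewrite big_split /= sum_mul_delta.
Qed.

Lemma comb_eq p q r p' q' r' :
  (forall i, p i + shadow q i = p' i + shadow q' i) ->
  (forall i, r i + shadow q i = r' i + shadow q' i) ->
  comb p q r = comb p' q' r'.
Proof.
move=> eqA eqC; rewrite -[comb p q r]hsubmxK -[comb p' q' r']hsubmxK.
by congr row_mx; apply/rowP => i; rewrite !mxE ?comb_lshift ?comb_rshift.
Qed.

Lemma shadow0 q i : (forall j, q j = 0) -> shadow q i = 0.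
Proof. by move=> q0; rewrite /shadow big1 // q0 mulr0 subrr mulr0. Qed.

Lemma shadow_ge0 q i : (forall j, 0 <= q j) -> 0 <= shadow q i.
Proof.
move=> q_ge0; rewrite mulr_ge0 ?invr_ge0 ?mulr_ge0 ?ler0n //.
have : q i <= \sum_j q j by rewrite (bigD1 i) //= lerDl sumr_ge0.
by have := q_ge0 i; lra.
Qed.

Lemma in_hullP S (x : 'rV[R]_(k + k)) :
  in_hull S x <-> exists p q r,
    [/\ forall l, 0 <= tri_weight p q r l,
        forall l, l \notin S -> tri_weight p q r l = 0,
        \sum_j (p j + q j + r j) = 1 & x = comb p q r].
Proof.
split=> [[w [w_ge0 [w1 ->]]] | [p [q [r [w_ge0 w_out w1 ->]]]]].
  pose wS l := if l \in S then w l else 0.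
  exists (fun j => wS (tA, j)), (fun j => wS (tB, j)), (fun j => wS (tC, j)).
  rewrite -sum_tri_weight /comb; split.
  - by move=> l; rewrite tri_weight_lbl /wS; case: ifP.
  - by move=> l /negbTE lS; rewrite tri_weight_lbl /wS lS.
  - under eq_bigr do rewrite tri_weight_lbl.
    by rewrite -w1 [RHS]big_mkcond.
  - apply/esym; under eq_bigr do rewrite tri_weight_lbl.
    rewrite [RHS]big_mkcond; apply: eq_bigr => l _.
    by rewrite /wS; case: ifP; rewrite ?scale0r.
exists (tri_weight p q r); split=> //; split.
  by rewrite big_rmcond ?sum_tri_weight // => l /w_out.
by rewrite /comb [RHS]big_rmcond // => l /w_out ->; rewrite scale0r.
Qed.

Lemma good_omit (omit : 'I_k -> 'I_3) :
  (exists j, omit j != tB) -> good [set l : lbl k | l.1 != omit l.2].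
Proof.
move=> [j0 omit_j0]; split; [|split].
- rewrite -sum1_card big_mkcond /= big_lbl.
  rewrite (eq_bigr (fun=> 2%N)) ?sum_nat_const ?card_ord 1?mulnC // => j _.
  by rewrite !inE /=; case: (omit j) => [[|[|[|t]]] ht].
- by move=> j all_j; have := all_j (omit j); rewrite inE eqxx.
- move=> S_AC; have : (tB, j0) \in labA k :|: labC k.
    by rewrite -S_AC inE eq_sym.
  by rewrite !inE.
Qed.

Lemma good_hull_omit p q r (x : 'rV[R]_(k + k)) (omit : 'I_k -> 'I_3) :
  (forall l, 0 <= tri_weight p q r l) -> \sum_j (p j + q j + r j) = 1 ->
  x = comb p q r -> (forall j, tri_weight p q r (omit j, j) = 0) ->
  (exists j, omit j != tB) -> exists S, good S /\ in_hull S x.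
Proof.
move=> w_ge0 w1 -> w_omit omit_B; exists [set l | l.1 != omit l.2].
split; first exact: good_omit.
apply/in_hullP; exists p, q, r; split=> // -[t j].
by rewrite inE negbK => /eqP /= ->; apply: w_omit.
Qed.

Section Nonempty.
Hypothesis k_gt0 : (0 < k)%N.

Lemma nn_neq0 : (nn k)%:R != 0 :> R.
Proof. by rewrite pnatr_eq0 /nn; case: k k_gt0 => // k' _; rewrite mulnS. Qed.

Lemma sum_shadow q : \sum_i shadow q i = (\sum_i q i) / 2.
Proof.
rewrite /shadow -mulr_sumr sumrB sumr_const card_ord -[_ *+ k]mulr_natr.
have -> : k%:R = ((nn k)%:R + 1) / 2 :> R.
  by rewrite /nn natrB ?muln_gt0 // natrM; field.
by field; rewrite nn_neq0.
Qed.

Lemma shadow_dilate (d : 'I_k -> R) v i :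
  \sum_j d j = v / 2 -> shadow (fun j => 2 * (nn k)%:R * d j) i = v - d i.
Proof.
by move=> dv; rewrite /shadow -mulr_sumr dv; field; rewrite nn_neq0.
Qed.

Lemma hull_sub_Delta0 S (x : 'rV[R]_(k + k)) :
  in_hull S x -> in_hull (labA k :|: labC k) x.
Proof.
case/in_hullP=> p [q [r [w_ge0 _ w1 ->]]].
have q_ge0 j : 0 <= q j by apply: (w_ge0 (tB, j)).
apply/in_hullP.
exists (fun j => p j + shadow q j), (fun=> 0), (fun j => r j + shadow q j); split.
- case=> -[[|[|[|t]]] ht] j //=; rewrite addr_ge0 ?shadow_ge0 //.
    exact: (w_ge0 (tA, j)).
  exact: (w_ge0 (tC, j)).
- by case=> -[[|[|[|t]]] ht] j //; rewrite !inE.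
- by rewrite -w1 !big_split /= sum_shadow big1_eq; lra.
- by apply: comb_eq => i; rewrite [shadow (fun=> 0) i]shadow0 // addr0.
Qed.

Lemma Delta0_sub_good_hull (x : 'rV[R]_(k + k)) :
  in_hull (labA k :|: labC k) x -> exists S, good S /\ in_hull S x.
Proof.
case/in_hullP=> a [b [c [w_ge0 w_out w1 ->]]].
have a_ge0 j : 0 <= a j by apply: (w_ge0 (tA, j)).
have c_ge0 j : 0 <= c j by apply: (w_ge0 (tC, j)).
have b0 j : b j = 0 by apply: (w_out (tB, j)); rewrite !inE.
pose m j := Num.min (a j) (c j).
have [|v [_ [j0 m_j0] hv]] := @exists_balanced_level R _ (Ordinal k_gt0) m.
  by move=> j; rewrite le_min a_ge0 c_ge0.
pose mu j := Num.min (m j) v.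
pose t j := 2 * (nn k)%:R * (v - mu j).
have sh_t j : shadow t j = mu j.
  by rewrite (shadow_dilate _ hv) /mu; ring.
have mu_le j : mu j <= a j /\ mu j <= c j.
  by rewrite /mu /m !ge_min !lexx !orbT.
pose omit j := if m j <= v then (if a j <= c j then tA else tC) else tB.
apply: (@good_hull_omit (fun j => a j - mu j) t (fun j => c j - mu j) _ omit).
- case=> -[[|[|[|s]]] hs] j /=; rewrite ?subr_ge0; try by case: (mu_le j).
  by rewrite mulr_ge0 ?mulr_ge0 ?ler0n // subr_ge0 ge_min lexx orbT.
- have sum_mu : \sum_j mu j = (\sum_j t j) / 2.
    by rewrite -sum_shadow; apply: eq_bigr => j _; rewrite sh_t.
  rewrite -w1 !big_split /= !sumrN sum_mu (eq_bigr _ (fun j _ => b0 j)) big1_eq; lra.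
- by apply: comb_eq => j; rewrite sh_t (shadow0 _ b0) subrK addr0.
- move=> j; rewrite /omit /mu.
  have [mv|vm] := leP (m j) v; last first.
    by rewrite /= /t /mu (min_r (ltW vm)) subrr mulr0.
  have [ac|ca] := leP (a j) (c j); rewrite /= (min_l mv) /m.
    by rewrite (min_l ac) subrr.
  by rewrite (min_r (ltW ca)) subrr.
- by exists j0; rewrite /omit m_j0; case: ifP.
Qed.

End Nonempty.
End Configuration.

Theorem mainTheorem8 (R : realFieldType) (k : nat) (hk : (2 <= k)%N)
    (x : 'rV[R]_(k + k)) :
  in_hull (labA k :|: labC k) x <-> exists S : {set lbl k}, good S /\ in_hull S x.
Proof.
have k_gt0 : (0 < k)%N by apply: leq_trans hk.
split; first exact: Delta0_sub_good_hull.
by case=> S [_]; apply: hull_sub_Delta0.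
Qed.
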